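(* Let $(D,V)$ be an admissible pair, $E,\alpha$ as below, and $\beta\in\mathbb{R}$ with $|\beta+\alpha|\le\tau(E)$. Then $V_\beta C^\infty(D)$ is a closed subspace of $C^\infty(D)$, and every $\varphi\in(V_\beta C^\infty(D))^\perp$ satisfies $(\mathcal{W}\varphi)(z)=ce^{i\beta z}$ for all $z\in\mathbb{C}$, for some constant $c\in\mathbb{C}$.
   Context: Let $H$ be a separable complex Hilbert space. A pair $(D,V)$ of operators is called admissible if: (i) $D:\mathscr{D}(D)\subset H\to H$ is a densely defined closed linear operator; (ii) $\dim\ker D=1$; (iii) $D$ has a self-adjoint restriction with compact resolvent; (iv) $V:H\to H$ is a compact operator with $\sigma(V)=\{0\}$; (v) $\operatorname{Ran}V\subset\mathscr{D}(D)$ and $DV=I$. Fix $0\neq\phi_0\in\ker D$ and put $\phi_\lambda=(I-\lambda V)^{-1}\phi_0$ for $\lambda\in\mathbb{C}$. The generalized Fourier transform is $(\mathcal{W}x)(\lambda)=\langle x,\phi_{\bar\lambda}\rangle_H$; $\mathcal{W}H$ is a Hilbert space of entire functions with norm $\|\mathcal{W}x\|:=\|x\|_H$. A Hermite–Biehler (HB) function is an entire $E$ with $|E(z)|>|E(\bar z)|$ for $z\in\mathbb{C}_+$; $\mathcal{H}(E)$ is the space of entire $f$ with $f/E,f^\#/E\in H^2(\mathbb{C}_+)$ ($f^\#(z)=\overline{f(\bar z)}$), normed by $\|f/E\|_{L^2(\mathbb{R})}$; $E$ is regular if $1/((z+i)E)\in H^2(\mathbb{C}_+)$; $\tau(f)=\limsup_{|z|\to\infty}\log|f(z)|/|z|$.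 It is known that there exist a regular HB function $E$ with no real zeros and $\alpha\in\mathbb{R}$ such that $f\mapsto e^{i\alpha z}f$ is a unitary map of $\mathcal{W}H$ onto $\mathcal{H}(E)$; fix such $E$ and $\alpha$. For $\beta\in\mathbb{R}$ with $|\beta+\alpha|\le\tau(E)$, the function $(1-e^{i\beta z})/z$ lies in $\mathcal{W}H$; set $x_\beta=\mathcal{W}^{-1}\big((1-e^{i\beta z})/z\big)$ and $V_\beta u=Vu+\langle u,x_\beta\rangle\phi_0$ for $u\in H$. Let $\mathscr{D}(D^1)=\mathscr{D}(D)$, $\mathscr{D}(D^n)=\{x\in\mathscr{D}(D^{n-1}):D^{n-1}x\in\mathscr{D}(D)\}$, and $C^\infty(D)=\bigcap_{n\ge1}\mathscr{D}(D^n)$, a Fréchet space with the metric $d(x,y)=\sum_{j\ge0}2^{-j}\frac{\|D^jx-D^jy\|_H}{1+\|D^jx-D^jy\|_H}$; $D$ and $V_\beta$ act continuously on it. For $\varphi\in(C^\infty(D))'$ set $(\mathcal{W}\varphi)(z)=\overline{\varphi(\phi_{\bar z})}$; $\mathcal{M}^\perp$ denotes the set of continuous functionals vanishing on $\mathcal{M}$. *)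

From HB Require Import structures.
From mathcomp Require Import all_boot all_order all_algebra.
From mathcomp Require Import complex.
From mathcomp Require Import all_classical all_reals all_analysis.
Import numFieldNormedType.Exports.
Import Order.TTheory GRing.Theory Num.Theory.

Set Implicit Arguments.
Unset Strict Implicit.
Unset Printing Implicit Defensive.

Local Open Scope classical_set_scope.
Local Open Scope ring_scope.
Local Open Scope complex_scope.

Section Defs.
Variable R : realType.
Local Notation C := R[i].

Definition ci : C := 0 +i* 1.

Definition cabs (z : C) : R := Num.sqrt (complex.Re z ^+ 2 + complex.Im z ^+ 2).

Definition cexp (z : C) : C :=
  (expR (complex.Re z))%:C * (cos (complex.Im z) +i* sin (complex.Im z)).

Definition cdiff (f : C -> C) (z : C) : Prop :=
  derivable (f : C^o -> C^o) z 1.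

Definition entire (f : C -> C) : Prop := forall z, cdiff f z.

Definition UHP : set C := [set z | 0 < complex.Im z].

Definition L2sq (g : R -> C) : \bar R :=
  (\int[@lebesgue_measure R]_(x in [set: R]) ((cabs (g x)) ^+ 2)%:E)%E.

Definition H2_UHP (f : C -> C) : Prop :=
  (forall z, UHP z -> cdiff f z) /\
  exists M : R, forall y : R, 0 < y -> (L2sq (fun x => f (x +i* y)) <= M%:E)%E.

Definition fsharp (f : C -> C) : C -> C := fun z => (f z^*)^*.

Definition HB (E : C -> C) : Prop :=
  entire E /\ forall z, UHP z -> cabs (E z^*) < cabs (E z).

Definition in_HE (E : C -> C) (f : C -> C) : Prop :=
  entire f /\ H2_UHP (fun z => f z / E z) /\ H2_UHP (fun z => fsharp f z / E z).

Definition normHE2 (E : C -> C) (f : C -> C) : \bar R :=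
  L2sq (fun x : R => f x%:C / E x%:C).

Definition regularHB (E : C -> C) : Prop :=
  H2_UHP (fun z => 1 / ((z + ci) * E z)).

Definition loggrowth (f : C -> C) (z : C) : \bar R :=
  if f z == 0 then (-oo)%E else (ln (cabs (f z)) / cabs z)%:E.

(* tau(f) = limsup_{|z| -> oo} log|f(z)|/|z| = inf_r sup_{|z|>r} ... *)
Definition tau (f : C -> C) : \bar R :=
  ereal_inf [set ereal_sup [set loggrowth f z | z in [set z | r < cabs z]]
            | r in [set: R]].

Variable H : completeNormedModType C.

Definition hnorm (x : H) : R := complex.Re `|x|.

(* ip is an inner product (linear in the first, conjugate-linear in the
   second argument) inducing the norm of H; H complete and separable. *)
Definition hilbert_space (ip : H -> H -> C) : Prop :=
  (forall a x y z, ip (a *: x + y) z = a * ip x z + ip y z) /\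
  (forall x y, ip y x = (ip x y)^*) /\
  (forall x, ip x x = `|x| ^+ 2) /\
  (exists s : nat -> H, dense (range s)).

Definition lin_subspace (S : set H) : Prop :=
  S 0 /\ forall a x y, S x -> S y -> S (a *: x + y).

Definition linear_on (S : set H) (T : H -> H) : Prop :=
  forall a x y, S x -> S y -> T (a *: x + y) = a *: T x + T y.

Definition bounded_op (T : H -> H) : Prop :=
  linear_on setT T /\ continuous T.

Definition compact_op (T : H -> H) : Prop :=
  linear_on setT T /\ compact (closure (T @` [set x | hnorm x <= 1])).

Definition spectrum (T : H -> H) : set C :=
  [set l | ~ exists S : H -> H, bounded_op S /\
             (forall x, T (S x) - l *: S x = x) /\
             (forall x, S (T x - l *: x) = x)].

(* the operator D with domain domD (values of D outside domD are irrelevant)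
   is a densely defined closed linear operator *)
Definition dd_closed_op (D : H -> H) (domD : set H) : Prop :=
  lin_subspace domD /\ linear_on domD D /\ dense domD /\
  closed [set p : H * H | domD p.1 /\ D p.1 = p.2].

Definition kerD (D : H -> H) (domD : set H) : set H :=
  [set x | domD x /\ D x = 0].

Definition dim_ker_1 (D : H -> H) (domD : set H) : Prop :=
  exists f, kerD D domD f /\ f <> 0 /\
    forall g, kerD D domD g -> exists a : C, g = a *: f.

Definition sa_restr_compact_resolvent (ip : H -> H -> C)
    (D : H -> H) (domD : set H) : Prop :=
  exists dom0 : set H,
    dom0 `<=` domD /\ lin_subspace dom0 /\ dense dom0 /\
    (* D(A^* ) = D(A) *)
    (forall y, dom0 y <-> exists z, forall x, dom0 x -> ip (D x) y = ip x z) /\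
    (* A^* = A on D(A) *)
    (forall x y, dom0 x -> dom0 y -> ip (D x) y = ip x (D y)) /\
    (exists (l : C) (Rl : H -> H), compact_op Rl /\
       (forall y, dom0 (Rl y) /\ D (Rl y) - l *: Rl y = y) /\
       (forall x, dom0 x -> Rl (D x - l *: x) = x)).

Definition admissible (ip : H -> H -> C) (D : H -> H) (domD : set H)
    (V : H -> H) : Prop :=
  dd_closed_op D domD /\
  dim_ker_1 D domD /\
  sa_restr_compact_resolvent ip D domD /\
  compact_op V /\ (forall l, spectrum V l <-> l = 0) /\
  (forall u, domD (V u) /\ D (V u) = u).

(* generalized Fourier transform (W x)(l) = <x, phi_{conj l}> *)
Definition gfourier (ip : H -> H -> C) (phi : C -> H) (x : H) : C -> C :=
  fun l => ip x (phi l^*).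

Fixpoint domDn (D : H -> H) (domD : set H) (n : nat) : set H :=
  match n with
  | 0 => setT
  | n'.+1 => [set x | domDn D domD n' x /\ domD (iter n' D x)]
  end.

Definition Cinf (D : H -> H) (domD : set H) : set H :=
  [set x | forall n, domDn D domD n x].

Definition dinf (D : H -> H) (x y : H) : R :=
  \big[+%R/0%R]_(0 <= j <oo)
    ((2 ^- j) * (hnorm (iter j D x - iter j D y)
                 / (1 + hnorm (iter j D x - iter j D y)))).

(* continuous linear functional on C^oo(D) (values outside C^oo(D) irrelevant) *)
Definition cont_functional (D : H -> H) (domD : set H) (f : H -> C) : Prop :=
  (forall a x y, Cinf D domD x -> Cinf D domD y -> f (a *: x + y) = a * f x + f y) /\
  (forall x, Cinf D domD x -> forall e : R, 0 < e -> exists2 d : R, 0 < d &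
     forall y, Cinf D domD y -> dinf D x y < d -> cabs (f x - f y) < e).

End Defs.
Arguments ci {R}.

From HB Require Import structures.
From mathcomp Require Import all_boot all_order all_algebra.
From mathcomp Require Import complex.
From mathcomp Require Import all_classical all_reals all_analysis.
From mathcomp Require Import ring lra.
Import numFieldNormedType.Exports.
Import Order.TTheory GRing.Theory Num.Theory.
Local Open Scope classical_set_scope.
Local Open Scope ring_scope.
Local Open Scope complex_scope.
Set Implicit Arguments.
Unset Strict Implicit.
Unset Printing Implicit Defensive.

(* For u in C^oo(D), [D (V_beta u) = u] since [D V = I] and [D phi0 = 0]; so
   V_beta is a bounded right inverse of D.  If V_beta u_n -> x in C^oo(D), then
   both V_beta u_n -> x and u_n = D (V_beta u_n) -> D x in H, and boundedness
   gives x = V_beta (D x): the range is closed.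
   For lambda = conj z <> 0, phi_lambda is an eigenvector of D with eigenvalue
   lambda, and V_beta phi_lambda = lambda^-1 phi_lambda
   + (<phi_lambda, x_beta> - lambda^-1) phi0.  A functional killing
   V_beta C^oo(D) therefore satisfies
   f phi_lambda = (1 - lambda <phi_lambda, x_beta>) f phi0 = conj (e^{i beta z}) f phi0,
   by the formula for W x_beta. *)

Section Series.
Variable R : realType.

Lemma le_series_dyadic (t : R ^nat) : (forall j, 0 <= t j <= 2^-j) ->
  forall j, t j <= \big[+%R/0%R]_(0 <= i <oo) t i.
Proof.
move=> t_bnd j.
have t_ge0 j' : 0 <= t j' by case/andP: (t_bnd j').
have t_cvg : cvgn (series t).
  apply: (@series_le_cvg _ _ (geometric 1 2^-1)) => // [n|n|].
  - by rewrite /geometric /= mul1r exprn_ge0 // invr_ge0.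
  - by rewrite /geometric /= mul1r exprVn; case/andP: (t_bnd n).
  - by apply: is_cvg_geometric_series; rewrite ger0_norm // invf_lt1 // ltr1n.
have t_le : t j <= series t j.+1.
  by rewrite /series /= big_nat_recr //= lerDr sumr_ge0.
apply: (le_trans t_le); apply: nondecreasing_cvgn_le t_cvg _.
exact: nondecreasing_series.
Qed.

Lemma lt_half_of_frac_lt (h s : R) : 0 <= h -> s <= 1/2 -> h / (1 + h) < s -> h < 2 * s.
Proof.
move=> h0 s2; rewrite ltr_pdivrMr; last by rewrite ltr_pwDl.
by move=> hs; nra.
Qed.
End Series.

Section LinearOn.
Variables (R : realType) (H : completeNormedModType R[i]).
Variables (S : set H) (T : H -> H).
Hypothesis linT : linear_on S T.

Lemma linear_on0 : S 0 -> T 0 = 0.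
Proof.
move=> S0; have := @linT 1 0 0 S0 S0; rewrite !scale1r addr0 => T00.
by apply: (addrI (T 0)); rewrite addr0 -T00.
Qed.

Lemma linear_onB x y : S x -> S y -> T (x - y) = T x - T y.
Proof.
move=> Sx Sy; have := @linT (-1) y x Sy Sx; rewrite !scaleN1r => TNyx.
by rewrite addrC TNyx addrC.
Qed.

Lemma linear_onZ a x : S 0 -> S x -> T (a *: x) = a *: T x.
Proof.
by move=> S0 Sx; have := @linT a x 0 Sx S0; rewrite !addr0 linear_on0 // addr0.
Qed.
End LinearOn.

Lemma lin_subspace_image (R : realType) (H : completeNormedModType R[i])
    (S : set H) (T : H -> H) :
  lin_subspace S -> linear_on setT T -> lin_subspace (T @` S).
Proof.
move=> [S0 SL] linT; split; first by exists 0 => //; rewrite (linear_on0 linT).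
move=> a _ _ [u Su <-] [v Sv <-]; exists (a *: u + v); first exact: SL.
exact: linT.
Qed.

Section SmoothVectors.
Variables (R : realType) (H : completeNormedModType R[i]).
Variables (D : H -> H) (domD : set H).
Hypotheses (subD : lin_subspace domD) (linD : linear_on domD D).

Lemma domDnP n x : domDn D domD n x <-> forall k, (k < n)%N -> domD (iter k D x).
Proof.
elim: n => [|n IH] /=; first by split.
split=> [[/IH domk domn] k|domk].
  by rewrite ltnS leq_eqVlt => /orP[/eqP->//|]; exact: domk.
by split; [apply/IH => k kn; apply/domk/ltnW | apply: domk].
Qed.

Lemma CinfP x : Cinf D domD x <-> forall k, domD (iter k D x).
Proof.
split=> [Cx k|domk n]; first by have /domDnP := Cx k.+1; apply.
by apply/domDnP => k _; apply: domk.
Qed.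

Lemma iter_linear a x y : Cinf D domD x -> Cinf D domD y -> forall k,
  iter k D (a *: x + y) = a *: iter k D x + iter k D y.
Proof.
by move=> /CinfP Cx /CinfP Cy; elim=> [//|k IH]; rewrite !iterS IH linD.
Qed.

Lemma lin_subspace_Cinf : lin_subspace (Cinf D domD).
Proof.
split.
  apply/CinfP => k; suff -> : iter k D 0 = 0 by case: subD.
  by elim: k => [//|k IH]; rewrite iterS IH (linear_on0 linD); case: subD.
move=> a x y Cx Cy; apply/CinfP => k; rewrite iter_linear //.
by apply: subD.2; [move/CinfP: Cx|move/CinfP: Cy].
Qed.

Lemma Cinf_D x : Cinf D domD x -> Cinf D domD (D x).
Proof. by move=> /CinfP Cx; apply/CinfP => k; rewrite -iterSr. Qed.

Lemma Cinf_eigenvector l p : domD p -> D p = l *: p -> Cinf D domD p.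
Proof.
move=> domp Dp; apply/CinfP => k.
suff -> : iter k D p = l ^+ k *: p.
  by have := subD.2 (l ^+ k) p 0 domp subD.1; rewrite addr0.
elim: k => [|k IH]; first by rewrite expr0 scale1r.
by rewrite iterS IH (linear_onZ linD) ?Dp ?scalerA -?exprSr //; case: subD.
Qed.

Lemma Cinf_rinv (T : H -> H) u : (forall v, domD (T v) /\ D (T v) = v) ->
  Cinf D domD u -> Cinf D domD (T u).
Proof.
move=> DT /CinfP Cu; apply/CinfP => -[|k]; first by case: (DT u).
by rewrite iterSr (DT u).2.
Qed.
End SmoothVectors.

Section InnerProduct.
Variables (R : realType) (H : completeNormedModType R[i]) (ip : H -> H -> R[i]).
Hypothesis hip : hilbert_space ip.

Lemma ipZl a x z : ip (a *: x) z = a * ip x z.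
Proof.
have ip0 : ip 0 z = 0.
  have := hip.1 1 0 0 z; rewrite scale1r addr0 mul1r => ip00.
  by apply: (addrI (ip 0 z)); rewrite addr0 -ip00.
by have := hip.1 a x 0 z; rewrite addr0 ip0 addr0.
Qed.

Lemma ipBl x y z : ip (x - y) z = ip x z - ip y z.
Proof.
by have := hip.1 (-1) y x z; rewrite scaleN1r mulN1r addrC => ->; rewrite addrC.
Qed.

Lemma ipC x y : ip y x = (ip x y)^*.
Proof. exact: hip.2.1. Qed.

Lemma ipBr x y z : ip x (y - z) = ip x y - ip x z.
Proof. by rewrite ipC ipBl rmorphB (ipC y x) (ipC z x). Qed.

Lemma ipZr a x z : ip x (a *: z) = conjc a * ip x z.
Proof. by rewrite ipC ipZl rmorphM (ipC z x). Qed.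

Lemma normr_ip_le x y : `|ip x y| <= `|x| * `|y|.
Proof.
have [->|y0] := eqVneq y 0.
  by have := ipZr 0 x 0; rewrite scale0r rmorph0 mul0r => ->; rewrite !normr0 mulr0.
set a := ip x y; set b := ip y y.
have bb : b^* = b by rewrite /b -ipC.
have b_gt0 : 0 < b by rewrite /b hip.2.2.1 exprn_gt0 // normr_gt0.
pose u := b *: x - a *: y.
have ipxu : ip x u = b * `|x| ^+ 2 - a^* * a by rewrite /u ipBr !ipZr bb hip.2.2.1.
have ipyu : ip y u = 0 by rewrite /u ipBr !ipZr bb -/b (ipC x y) -/a mulrC subrr.
have ipuu : ip u u = b * (b * `|x| ^+ 2 - `|a| ^+ 2).
  by rewrite {1}/u ipBl !ipZl ipxu ipyu sqr_normc mulr0 subr0 [a * _]mulrC.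
have : `|a| ^+ 2 <= (`|x| * `|y|) ^+ 2.
  rewrite exprMn -(hip.2.2.1 y) -/b mulrC -subr_ge0.
  by rewrite -(pmulr_rge0 _ b_gt0) -ipuu hip.2.2.1 exprn_ge0.
by rewrite ler_pXn2r // nnegrE // mulr_ge0.
Qed.
End InnerProduct.

Section Norms.
Variables (R : realType) (H : completeNormedModType R[i]).

Lemma normr_hnorm (x : H) : `|x| = (hnorm x)%:C.
Proof. by rewrite /hnorm RRe_real // ger0_real. Qed.

Lemma hnorm_ge0 (x : H) : 0 <= hnorm x.
Proof. by have := normr_ge0 x; rewrite normr_hnorm lecR. Qed.

Lemma eq0_hnorm_small (z : H) (k : R) :
  (forall e, 0 < e -> e <= 1/4 -> hnorm z <= k * e) -> z = 0.
Proof.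
move=> zsmall; apply/normr0_eq0; rewrite normr_hnorm.
suff -> : hnorm z = 0 by [].
apply/eqP; rewrite eq_le hnorm_ge0 andbT leNgt; apply/negP => z_gt0.
have k_ge0 : 0 <= k.
  have := zsmall (1/4) ltac:(lra) (lexx _); nra.
pose e := hnorm z / (4 * (k + 1 + hnorm z)).
have d_gt0 : 0 < 4 * (k + 1 + hnorm z) by lra.
have eE : e * (4 * (k + 1 + hnorm z)) = hnorm z by rewrite /e mulfVK // gt_eqF.
have e_gt0 : 0 < e by rewrite /e divr_gt0.
have := zsmall e e_gt0; nra.
Qed.

Lemma compact_normr_bounded (A : set H) :
  compact A -> exists M : nat, forall q, A q -> `|q| <= M%:R.
Proof.
rewrite compact_cover => Aco.
have covA : A `<=` \bigcup_(n : nat) [set p : H | `|p| < n%:R].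
  move=> p _; exists (Num.truncn (hnorm p)).+1 => //=.
  by rewrite normr_hnorm -(rmorph_nat _ _ : (_%:R)%:C = _) ltcR truncnS_gt.
have /Aco [] := covA.
  move=> n _; rewrite openE => p; rewrite /= -subr_gt0 => ltpn.
  apply/nbhs_ballP; exists (n%:R - `|p|) => // q.
  rewrite -ball_normE /= ltrBrDr distrC; apply: le_lt_trans.
  by rewrite -{1}(subrK p q) ler_normD.
move=> F _ FcovA.
exists (\max_(i <- finmap.enum_fset F) i)%N => q /FcovA [n Fn] /= /ltW qn.
apply: (le_trans qn); rewrite ler_nat.
by apply: leq_bigmax_seq => //; have : n \in finmap.enum_fset F by [].
Qed.

Lemma compact_op_bounded (V : H -> H) : compact_op V ->
  exists M : nat, forall v, `|V v| <= M%:R * `|v|.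
Proof.
move=> [linV /compact_normr_bounded [M VM]]; exists M => v.
have [->|v0] := eqVneq v 0.
  by rewrite (linear_on0 linV) // !normr0 mulr0.
have v_gt0 : 0 < `|v| by rewrite normr_gt0.
have Vunit : `|V (`|v|^-1 *: v)| <= M%:R.
  apply: VM; apply: subset_closure; exists (`|v|^-1 *: v) => //.
  by rewrite /= /hnorm normrZ normfV normr_id mulVf ?gt_eqF.
rewrite (linear_onZ linV) // normrZ normfV normr_id ler_pdivrMl // in Vunit.
by rewrite mulrC.
Qed.
End Norms.

Section FrechetMetric.
Variables (R : realType) (H : completeNormedModType R[i]) (D : H -> H).

Lemma dinf_ge_term x y j :
  let h := hnorm (iter j D x - iter j D y) in 2^-j * (h / (1 + h)) <= dinf D x y.
Proof.
apply: (le_series_dyadic (t := fun j => 2^-j * _)) => i.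
set h := hnorm _; have h_ge0 : 0 <= h := hnorm_ge0 _.
have h1_gt0 : 0 < 1 + h by rewrite ltr_pwDl.
have q_ge0 : 0 <= h / (1 + h) by rewrite divr_ge0 // ltW.
have q_le1 : h / (1 + h) <= 1 by rewrite ler_pdivrMr // mul1r lerDr.
by rewrite mulr_ge0 ?invr_ge0 ?exprn_ge0 //= ler_piMr // invr_ge0 exprn_ge0.
Qed.

Lemma hnorm_lt_dinf x y e : 0 < e -> e <= 1/4 -> dinf D x y < e ->
  hnorm (x - y) < 4 * e /\ hnorm (D x - D y) < 4 * e.
Proof.
move=> e_gt0 e_le dxy; split.
  have := le_lt_trans (dinf_ge_term x y 0) dxy; rewrite expr0 invr1 mul1r /= => h.
  have := lt_half_of_frac_lt (hnorm_ge0 _) _ h; lra.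
have := le_lt_trans (dinf_ge_term x y 1) dxy; rewrite expr1 /=.
set q := _ / _ => h.
have q_lt : q < 2 * e by rewrite -ltr_pdivrMl // ?invrK // mulrC.
have := lt_half_of_frac_lt (hnorm_ge0 _) _ q_lt; lra.
Qed.
End FrechetMetric.

Lemma rinv_image_closed (R : realType) (H : completeNormedModType R[i])
    (D T : H -> H) (K : R) x :
  linear_on setT T -> 0 <= K -> (forall w, `|T w| <= K%:C * `|w|) ->
  (forall u, D (T u) = u) ->
  (forall e : R, 0 < e -> exists u, dinf D x (T u) < e) -> x = T (D x).
Proof.
move=> linT K_ge0 normT DT approx.
apply/eqP; rewrite -subr_eq0; apply/eqP.
apply: (@eq0_hnorm_small _ _ _ (4 * (1 + K))) => e e_gt0 e_le.
have [u /(hnorm_lt_dinf e_gt0 e_le)] := approx e e_gt0; rewrite DT => -[xu Dxu].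
have -> : x - T (D x) = (x - T u) - T (D x - u).
  by rewrite (linear_onB linT) // opprB addrA subrK.
rewrite -lecR -normr_hnorm; apply: le_trans (ler_normB _ _) _.
have -> : (4 * (1 + K) * e)%:C = (4 * e)%:C + K%:C * (4 * e)%:C.
  by rewrite -rmorphM -rmorphD; congr _%:C; ring.
apply: lerD; first by rewrite normr_hnorm lecR ltW.
apply: le_trans (normT _) _; rewrite ler_wpM2l ?lecR //.
by rewrite normr_hnorm lecR ltW.
Qed.

Lemma cexp0 (R : realType) : cexp (0 : R[i]) = 1.
Proof. by rewrite /cexp /= expR0 cos0 sin0 complexr0 rmorph1 mul1r. Qed.

Section Vbeta.
Variables (R : realType) (H : completeNormedModType R[i]) (ip : H -> H -> R[i]).
Variables (D : H -> H) (domD : set H) (V : H -> H) (phi0 xb : H).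
Hypotheses (hip : hilbert_space ip) (subD : lin_subspace domD).
Hypotheses (linD : linear_on domD D) (linV : linear_on setT V).
Hypotheses (DV : forall u, domD (V u) /\ D (V u) = u).
Hypotheses (dphi0 : domD phi0) (Dphi0 : D phi0 = 0).

Definition Vbeta u := V u + ip u xb *: phi0.

Lemma Vbeta_rinv u : domD (Vbeta u) /\ D (Vbeta u) = u.
Proof.
have [dVu DVu] := DV u.
rewrite /Vbeta addrC; split; first exact: subD.2.
by rewrite linD // Dphi0 scaler0 add0r.
Qed.

Lemma linear_Vbeta : linear_on setT Vbeta.
Proof.
move=> a u v _ _; rewrite /Vbeta (@linV a u v I I) hip.1 scalerDl -scalerA.
by rewrite scalerDr addrACA.
Qed.

Lemma normr_Vbeta_le : compact_op V ->
  exists K : R, 0 <= K /\ forall w, `|Vbeta w| <= K%:C * `|w|.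
Proof.
move=> /compact_op_bounded [M normV].
exists (M%:R + hnorm xb * hnorm phi0); split.
  by rewrite addr_ge0 ?mulr_ge0 ?hnorm_ge0.
have -> : (M%:R + hnorm xb * hnorm phi0)%:C = M%:R + `|xb| * `|phi0| :> R[i].
  by rewrite !normr_hnorm rmorphD rmorphM rmorph_nat.
move=> w; rewrite mulrDl.
apply: le_trans (ler_normD _ _) (lerD (normV w) _).
rewrite normrZ mulrAC ler_wpM2r // mulrC; exact: normr_ip_le.
Qed.

Lemma resolvent_eigenvector l p : p - l *: V p = phi0 -> domD p /\ D p = l *: p.
Proof.
move=> pE; have {}pE : p = l *: V p + phi0 by rewrite -pE addrC subrK.
have [dVp DVp] := DV p.
have dp : domD p by rewrite pE; apply: subD.2.
by split=> //; rewrite {1}pE linD // DVp Dphi0 addr0.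
Qed.

Lemma annihilator_resolvent (f : H -> R[i]) l p :
  (forall a x y, Cinf D domD x -> Cinf D domD y -> f (a *: x + y) = a * f x + f y) ->
  (forall u, Cinf D domD u -> f (Vbeta u) = 0) ->
  l != 0 -> p - l *: V p = phi0 -> f p = (1 - l * ip p xb) * f phi0.
Proof.
move=> flin fann l0 pE.
have Cinf0 := lin_subspace_Cinf subD linD; have [C0 _] := Cinf0.
have fZ a x : Cinf D domD x -> f (a *: x) = a * f x.
  have f0 : f 0 = 0.
    have := flin 1 0 0 C0 C0; rewrite scale1r addr0 mul1r => f00.
    by apply: (addrI (f 0)); rewrite addr0 -f00.
  by move=> Cx; have := flin a x 0 Cx C0; rewrite !addr0 f0 addr0.
have [dp Dp] := resolvent_eigenvector pE.
have Cp := Cinf_eigenvector subD linD dp Dp.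
have Cphi0 : Cinf D domD phi0.
  by apply: (Cinf_eigenvector subD linD (l := 0)); rewrite // Dphi0 scale0r.
have VbE : Vbeta p = l^-1 *: p + (ip p xb - l^-1) *: phi0.
  have lVp : l *: V p = p - phi0 by rewrite -pE opprB addrC subrK.
  by rewrite /Vbeta -[V p](scalerK l0) lVp scalerBr scalerBl addrA addrAC.
have Cphi0' : Cinf D domD ((ip p xb - l^-1) *: phi0).
  by have := Cinf0.2 (ip p xb - l^-1) phi0 0 Cphi0 C0; rewrite addr0.
have := fann p Cp; rewrite VbE flin ?fZ //.
move=> /(congr1 ( *%R l)); rewrite mulr0 mulrDr !mulrA mulfV // mul1r mulrBr mulfV //.
by move/eqP; rewrite addr_eq0 => /eqP ->; rewrite -[LHS]mulNr opprB.
Qed.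
End Vbeta.

Theorem lemma6p12 (R : realType) (H : completeNormedModType R[i])
    (ip : H -> H -> R[i]) (D : H -> H) (domD : set H) (V : H -> H)
    (phi0 : H) (phi : R[i] -> H) (E : R[i] -> R[i]) (alpha beta : R)
    (xb : H) :
  hilbert_space ip ->
  admissible ip D domD V ->
  (* 0 <> phi0 in ker D *)
  kerD D domD phi0 -> phi0 <> 0 ->
  (* phi_l = (I - l V)^{-1} phi0 *)
  (forall l, phi l - l *: V (phi l) = phi0) ->
  (* E regular HB without real zeros, alpha real, f |-> e^{i alpha z} f
     unitary from W H onto H(E) *)
  HB E -> regularHB E -> (forall x : R, E x%:C <> 0) ->
  (forall x, in_HE E (fun z => cexp (ci * alpha%:C * z) * gfourier ip phi x z)
             /\ normHE2 E (fun z => cexp (ci * alpha%:C * z) * gfourier ip phi x z)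
                = ((hnorm x) ^+ 2)%:E) ->
  (forall f, in_HE E f -> exists x,
       forall z, f z = cexp (ci * alpha%:C * z) * gfourier ip phi x z) ->
  (* |beta + alpha| <= tau(E) *)
  (`|beta + alpha|%:E <= tau E)%E ->
  (* x_beta = W^{-1}((1 - e^{i beta z})/z) *)
  (forall z, gfourier ip phi xb z =
     if z == 0 then - (ci * beta%:C) else (1 - cexp (ci * beta%:C * z)) / z) ->
  let Vb := fun u => V u + ip u xb *: phi0 in
  (* V_beta C^oo(D) is a closed lin_subspace of C^oo(D) *)
  ((forall u, Cinf D domD u -> Cinf D domD (Vb u)) /\
   lin_subspace [set Vb u | u in Cinf D domD] /\
   (forall x, Cinf D domD x ->
      (forall e : R, 0 < e -> exists u, Cinf D domD u /\ dinf D x (Vb u) < e) ->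
      exists u, Cinf D domD u /\ x = Vb u)) /\
  (* annihilator functionals have W phi = c e^{i beta z} *)
  (forall f : H -> R[i], cont_functional D domD f ->
     (forall u, Cinf D domD u -> f (Vb u) = 0) ->
     exists c : R[i], forall z, (f (phi z^*))^* = c * cexp (ci * beta%:C * z)).
Proof.
move=> hip [[subD [linD _]] [_ [_ [cV [_ DV]]]]] [dphi0 Dphi0] _ phiE _ _ _ _ _ _.
move=> xbE Vb.
have Vb_rinv := Vbeta_rinv ip xb subD linD DV dphi0 Dphi0.
have linVb := linear_Vbeta phi0 xb hip cV.1.
split; [split; [|split]|].
- by move=> u; apply: Cinf_rinv.
- exact: lin_subspace_image (lin_subspace_Cinf subD linD) linVb.
- move=> x Cx approx; exists (D x); split; first exact: Cinf_D.
  have [K [K_ge0 normVb]] := normr_Vbeta_le phi0 xb hip cV.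
  apply: rinv_image_closed linVb K_ge0 normVb (fun u => (Vb_rinv u).2) _.
  by move=> e /approx [u [_ dxu]]; exists u.
- move=> f [flin _] fann; exists (f phi0)^* => z.
  have [->|z0] := eqVneq z 0.
    have := phiE 0; rewrite scale0r subr0 conjc0 => ->.
    by rewrite mulr0 cexp0 mulr1.
  have l0 : z^* != 0 by rewrite conjc_eq0.
  rewrite (annihilator_resolvent (xb := xb) subD linD DV dphi0 Dphi0 flin fann l0 (phiE _)).
  have := xbE z; rewrite /gfourier (negbTE z0) => xbz.
  rewrite (ipC hip) xbz fmorph_div rmorphB rmorph1 mulrCA mulfV // mulr1.
  by rewrite opprB addrC subrK (conjc_is_multiplicative _).1 conjcK mulrC.
Qed.
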